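(* Let $G$ be a finite group, $K\unlhd H\le G$ with $H/K$ cyclic, $A\unlhd H$, and $D=K\cap A$. Then $\varepsilon(A,D)=\varepsilon(H,K)+e$ for some central idempotent $e$ of $\mathbb{Q}H$ orthogonal to $\varepsilon(H,K)$.
   Context: For $K\unlhd H$: $\widehat{H}=\frac1{|H|}\sum_{h\in H}h$; $\varepsilon(H,K)=\widehat K$ if $H=K$, and otherwise $\varepsilon(H,K)=\prod(\widehat K-\widehat L)$, the product over all $L\unlhd H$ with $K\subsetneq L$ and $L/K$ a minimal normal subgroup of $H/K$. *)

From mathcomp Require Import all_boot all_order all_algebra all_fingroup all_solvable.
Set Implicit Arguments. Unset Strict Implicit. Unset Printing Implicit Defensive.
Import GRing.Theory.
Local Open Scope ring_scope.

(* The rational group algebra Q[gT] of a finite group type gT, represented as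
   finitely supported functions gT -> rat (all functions, gT being finite).
   Addition/subtraction/zero are the pointwise ones of {ffun gT -> rat};
   multiplication is convolution. For a subgroup H, QH is the subalgebra of
   functions supported in H. *)
Section GroupAlgebra.
Variable gT : finGroupType.

Definition galg := {ffun gT -> rat}.

Definition gaMul (f g : galg) : galg :=
  [ffun x => \sum_(y : gT) f y * g ((y^-1) * x)%g].

Definition gaOne : galg := [ffun x => if x == 1%g then 1 else 0].

Definition hat (H : {set gT}) : galg :=
  [ffun x => if x \in H then (#|H|%:R)^-1 else 0].

Definition eps (H K : {set gT}) : galg :=
  if H == K then hat K
  else \big[gaMul/gaOne]_(L : {group gT} |
          [&& (L <| H)%g, K \proper L & minnormal (L / K)%g (H / K)%g])
          (hat K - hat L).

Definition in_galg (H : {set gT}) (f : galg) : Prop :=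
  forall x, x \notin H -> f x = 0.

Definition central_idem (H : {set gT}) (e : galg) : Prop :=
  [/\ in_galg H e,
      forall a, in_galg H a -> gaMul a e = gaMul e a
    & gaMul e e = e].

End GroupAlgebra.

From mathcomp Require Import all_boot all_order all_algebra all_fingroup all_solvable.
Set Implicit Arguments. Unset Strict Implicit. Unset Printing Implicit Defensive.
Import GRing.Theory.
Local Open Scope ring_scope.

(* Put D := K :&: A. Both eps H K and eps A D are central idempotents of QH
   (the subgroups M occurring in eps A D are normal in H), so it is enough to
   show eps H K * eps A D = eps H K and take e := eps A D - eps H K. Since
   A / D embeds in the cyclic group H / K, every factor hat D - hat M of
   eps A D has M / D of prime order; then K M / K, isomorphic to M / D, is a
   minimal normal subgroup of H / K, so hat K - hat (K M) is a factor of
   eps H K. Hence eps H K * hat M = eps H K * hat K * hat M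
   = eps H K * hat (K M) = 0, while eps H K * hat D = eps H K. *)

Section MinimalNormal.
Variable gT : finGroupType.
Local Open Scope nat_scope.
Local Open Scope group_scope.

Lemma minnormal_prime (X Y : {group gT}) :
  prime #|X| -> Y \subset 'N(X) -> minnormal X Y.
Proof.
move=> pX nXY; apply/mingroupP; split; first by rewrite -cardG_gt1 prime_gt1.
move=> Z /andP[ntZ _] sZX; apply/eqP; rewrite eqEcard sZX /=.
case/primeP: pX => _ /(_ _ (cardSg sZX))/orP[/eqP Z1 | /eqP -> //].
by rewrite -cardG_gt1 Z1 in ntZ.
Qed.

Lemma minnormal_abelian_prime (X Y : {group gT}) :
  abelian Y -> X \subset Y -> minnormal X Y -> prime #|X|.
Proof.
move=> abY sXY /mingroupP[/andP[ntX _] minX].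
have p_pr : prime (pdiv #|X|) by rewrite pdiv_prime ?cardG_gt1.
have [x xX ox] := Cauchy p_pr (pdiv_dvd _).
have ntx : <[x]> != 1 :> {set gT} by rewrite -cardG_gt1 -orderE ox prime_gt1.
have nxY : Y \subset 'N(<[x]>).
  by apply: sub_abelian_norm; rewrite // cycle_subG (subsetP sXY).
by rewrite -(minX <[x]>%G) ?ntx ?nxY ?cycle_subG // -orderE ox.
Qed.

Lemma exists_minnormal_quotient (H K : {group gT}) : K <| H -> H :!=: K ->
  exists L : {group gT}, [&& L <| H, K \proper L & minnormal (L / K) (H / K)].
Proof.
move=> nKH neHK; have [sKH nKH'] := andP nKH.
have ntHK : H / K != 1.
  apply: contra neHK => /eqP HK1.
  by rewrite eqEsubset sKH andbT -(quotient_sub1 nKH') HK1.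
have [M minM sMHK] := minnormal_exists ntHK (normG (H / K)).
have [/andP[ntM nMHK] _] := mingroupP minM.
exists (coset K @*^-1 M)%G; rewrite /= cosetpreK minM andbT.
apply/andP; split.
  by rewrite -(quotientGK nKH) cosetpre_normal /normal sMHK.
rewrite properEneq sub_cosetpre andbT; apply: contraNneq ntM => KM.
by rewrite -(cosetpreK M) -KM trivg_quotient.
Qed.

End MinimalNormal.

Section CyclicQuotient.
Variables (gT : finGroupType) (H K A M : {group gT}).
Local Open Scope nat_scope.
Local Open Scope group_scope.
Hypotheses (nKH : K <| H) (cHK : cyclic (H / K)) (nAH : A <| H).
Hypotheses (nMA : M <| A) (pDM : K :&: A \proper M)
  (minMA : minnormal (M / (K :&: A)) (A / (K :&: A))).

Let sMA : M \subset A := normal_sub nMA.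
Let sMH : M \subset H := subset_trans sMA (normal_sub nAH).
Let nKM : M \subset 'N(K) := subset_trans sMH (normal_norm nKH).
Let abHK : abelian (H / K) := cyclic_abelian cHK.

Lemma joing_mulg_normal : K <*> M = K * M.
Proof. exact: norm_joinEr nKM. Qed.

Lemma card_quotient_prime : prime #|M / K|.
Proof.
have KM_D : K :&: M = K :&: A.
  by apply/eqP; rewrite eqEsubset setIS //= subsetI subsetIl proper_sub.
rewrite -(card_isog (second_isog nKM)) KM_D.
apply: minnormal_abelian_prime minMA; last exact: quotientS.
have nKA : A \subset 'N(K) := subset_trans (normal_sub nAH) (normal_norm nKH).
apply: cyclic_abelian; rewrite (isog_cyclic (second_isog nKA)).
by apply: cyclicS cHK; exact/quotientS/normal_sub.
Qed.

Lemma joing_minnormal_quotient :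
  [&& K <*> M <| H, K \proper K <*> M & minnormal ((K <*> M) / K) (H / K)].
Proof.
have LK : (K <*> M) / K = M / K by rewrite joing_mulg_normal quotientMidl.
apply/and3P; split.
- apply: sub_der1_normal; last by rewrite join_subG normal_sub.
  exact: subset_trans (der1_min (normal_norm nKH) abHK) (joing_subl K M).
- rewrite properEneq joing_subl andbT; apply: contraTneq card_quotient_prime.
  by move=> KL; rewrite -LK -KL trivg_quotient cards1.
rewrite LK minnormal_prime ?card_quotient_prime //.
exact/sub_abelian_norm/quotientS.
Qed.

Lemma normal_minnormal_cyclic : M <| H.
Proof.
have /and3P[nLH _ _] := joing_minnormal_quotient.
have -> : gval M = (K <*> M) :&: A.
  rewrite joing_mulg_normal -(normC nKM) -group_modl // mulGSid //.
  exact: proper_sub.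
exact: normalI.
Qed.

End CyclicQuotient.

Section GroupAlgebra.
Variable gT : finGroupType.
Implicit Types (f g h : galg gT) (N M G : {group gT}).

Lemma gaMulA f g h : gaMul (gaMul f g) h = gaMul f (gaMul g h).
Proof.
apply/ffunP=> x; rewrite !ffunE.
under eq_bigr do rewrite ffunE big_distrl /=.
rewrite exchange_big /=; apply: eq_bigr => z _; rewrite ffunE big_distrr /=.
rewrite (reindex_inj (mulgI z)) /=; apply: eq_bigr => w _.
by rewrite mulKg invMg -mulgA mulrA.
Qed.

Lemma gaMulBl f g h : gaMul (f - g) h = gaMul f h - gaMul g h.
Proof.
apply/ffunP=> x; rewrite !ffunE -sumrB; apply: eq_bigr => y _.
by rewrite !ffunE mulrBl.
Qed.

Lemma gaMulBr f g h : gaMul h (f - g) = gaMul h f - gaMul h g.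
Proof.
apply/ffunP=> x; rewrite !ffunE -sumrB; apply: eq_bigr => y _.
by rewrite !ffunE mulrBr.
Qed.

Lemma gaMul0r f : gaMul 0 f = 0.
Proof.
by apply/ffunP=> x; rewrite !ffunE big1 // => y _; rewrite ffunE mul0r.
Qed.

Lemma gaMulr0 f : gaMul f 0 = 0.
Proof.
by apply/ffunP=> x; rewrite !ffunE big1 // => y _; rewrite ffunE mulr0.
Qed.

Lemma gaMul1r f : gaMul (gaOne gT) f = f.
Proof.
apply/ffunP=> x; rewrite ffunE (bigD1 1%g) //= big1 ?addr0.
  by rewrite ffunE eqxx mul1r invg1 mul1g.
by move=> y /negbTE ny1; rewrite ffunE ny1 mul0r.
Qed.

Lemma gaMulr1 f : gaMul f (gaOne gT) = f.
Proof.
apply/ffunP=> x; rewrite ffunE (bigD1 x) //= big1 ?addr0.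
  by rewrite ffunE mulVg eqxx mulr1.
move=> y nyx; rewrite ffunE; case: eqP => [yx1 | _]; last by rewrite mulr0.
by case/eqP: nyx; apply: (mulgI y^-1%g); rewrite yx1 mulVg.
Qed.

Lemma hatM N M : gaMul (hat N) (hat M) =
  [ffun x => if x \in (N * M)%g
             then ((#|N| * #|M|)%:R)^-1 * #|N :&: M|%:R else 0].
Proof.
apply/ffunP=> x; rewrite !ffunE.
transitivity (\sum_(y in N :&: (x *: M)%g) ((#|N| * #|M|)%:R)^-1 : rat).
  rewrite [RHS]big_mkcond /=; apply: eq_bigr => y _; rewrite !ffunE in_setI.
  case: (y \in N); last by rewrite mul0r.
  rewrite mem_lcoset -groupV invMg invgK.
  by case: (_ \in M); rewrite ?mulr0 // natrM invfM mulrC.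
rewrite sumr_const; case: ifP => [/mulsgP[n m nN mM ->] | notNMx].
  have -> : (N :&: (n * m) *: M = n *: (N :&: M))%g.
    apply/setP=> y; rewrite inE !mem_lcoset inE invMg -mulgA.
    rewrite (groupMl _ (groupVr mM)) (groupMl _ (groupVr nN)).
    by case: (y \in N); rewrite ?andbF.
  by rewrite card_lcoset mulr_natr.
suff -> : N :&: (x *: M)%g = set0 by rewrite cards0 mulr0n.
apply/setP=> y; rewrite !inE mem_lcoset; apply/negbTE/negP=> /andP[yN yxM].
move/negbT/negP: notNMx; apply.
by rewrite -[x](mulKVg y) -[(y^-1 * x)%g]invgK invMg invgK mem_mulg ?groupV.
Qed.

Lemma hatM_mulg N M G : (N * M)%g = G :> {set gT} ->
  gaMul (hat N) (hat M) = hat G.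
Proof.
move=> NM_G; rewrite hatM; apply/ffunP=> x; rewrite !ffunE NM_G.
case: (x \in G) => //; have := mul_cardG N M; rewrite NM_G => ->.
by rewrite natrM invfM -mulrA mulVf ?mulr1 // Num.Theory.pnatr_eq0 -lt0n.
Qed.

Lemma hatM_subl N M : N \subset M -> gaMul (hat N) (hat M) = hat M.
Proof. by move=> sNM; apply: hatM_mulg; rewrite mulSGid. Qed.

Lemma hatM_subr N M : M \subset N -> gaMul (hat N) (hat M) = hat N.
Proof. by move=> sMN; apply: hatM_mulg; rewrite mulGSid. Qed.

Lemma hat_idem N : gaMul (hat N) (hat N) = hat N.
Proof. exact: hatM_subl. Qed.

Lemma hatB_idem N M : N \subset M ->
  gaMul (hat N - hat M) (hat N - hat M) = hat N - hat M.
Proof.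
move=> sNM; rewrite gaMulBl !gaMulBr hat_idem hatM_subl // hatM_subr //.
by rewrite hat_idem subrr subr0.
Qed.

End GroupAlgebra.

Section CentralElements.
Variables (gT : finGroupType) (H : {group gT}).
Implicit Types (f g a e : galg gT) (N M : {group gT}).

Lemma in_galgM f g : in_galg H f -> in_galg H g -> in_galg H (gaMul f g).
Proof.
move=> Hf Hg x xH; rewrite ffunE big1 // => y _.
case yH: (y \in H); last by rewrite Hf ?yH ?mul0r.
by rewrite Hg ?mulr0 // groupMl ?groupV.
Qed.

Lemma in_galgB f g : in_galg H f -> in_galg H g -> in_galg H (f - g).
Proof. by move=> Hf Hg x xH; rewrite !ffunE Hf // Hg // subrr. Qed.

Definition central f :=
  in_galg H f /\ forall a, in_galg H a -> gaMul a f = gaMul f a.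

Lemma central_idemP e : central_idem H e <-> central e /\ gaMul e e = e.
Proof. by split=> [[He ce ee] | [[He ce] ee]]. Qed.

Lemma centralM f g : central f -> central g -> central (gaMul f g).
Proof.
move=> [Hf cf] [Hg cg]; split=> [|a Ha]; first exact: in_galgM.
by rewrite -gaMulA cf // !gaMulA cg.
Qed.

Lemma centralB f g : central f -> central g -> central (f - g).
Proof.
move=> [Hf cf] [Hg cg]; split=> [|a Ha]; first exact: in_galgB.
by rewrite gaMulBl gaMulBr cf // cg.
Qed.

Lemma central_hat N : (N <| H)%g -> central (hat N).
Proof.
case/andP=> sNH nNH; split=> [x xH | a Ha].
  by rewrite ffunE; case: ifP => // /(subsetP sNH) xH'; rewrite xH' in xH.
apply/ffunP=> x; rewrite !ffunE.
rewrite (reindex_inj (inj_comp (mulIg x) invg_inj)) /=.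
apply: eq_bigr => z _; rewrite !ffunE mulrC.
case zxH: ((z^-1 * x)%g \in H); last by rewrite Ha ?zxH ?mulr0 ?mul0r.
congr (_ * _); rewrite -(memJ_norm z (subsetP nNH _ zxH)).
by rewrite conjgE invMg !invgK !mulgA mulgK.
Qed.

Lemma central1 : central (gaOne gT).
Proof.
split=> [x xH | a _]; last by rewrite gaMul1r gaMulr1.
by rewrite ffunE; case: eqP => // x1; rewrite x1 group1 in xH.
Qed.

Lemma central_idem1 : central_idem H (gaOne gT).
Proof. by apply/central_idemP; split; [exact: central1 | exact: gaMul1r]. Qed.

Lemma central_idemM e f :
  central_idem H e -> central_idem H f -> central_idem H (gaMul e f).
Proof.
move=> /central_idemP[ce ee] /central_idemP[cf ff].
apply/central_idemP; split; first exact: centralM.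
by rewrite gaMulA -(gaMulA f) -(cf.2 e ce.1) gaMulA ff -gaMulA ee.
Qed.

Lemma central_idem_hatB N M : (N <| H)%g -> (M <| H)%g -> (N \subset M)%g ->
  central_idem H (hat N - hat M).
Proof.
move=> nNH nMH sNM; apply/central_idemP.
by split; [apply: centralB; apply: central_hat | apply: hatB_idem].
Qed.

Lemma central_idem_subr e f : central_idem H e -> central_idem H f ->
  gaMul e f = e ->
  [/\ central_idem H (f - e), gaMul (f - e) e = 0 & gaMul e (f - e) = 0].
Proof.
move=> /central_idemP[ce ee] /central_idemP[cf ff] ef_e.
have fe_e : gaMul f e = e by rewrite -(cf.2 e ce.1).
split; last by rewrite gaMulBr ef_e ee subrr.
- apply/central_idemP; split; first exact: centralB.
  by rewrite gaMulBl !gaMulBr ff fe_e ef_e ee subrr subr0.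
by rewrite gaMulBl fe_e ee subrr.
Qed.

Section BigProducts.
Variables (I : eqType) (P : pred I) (F : I -> galg gT).
Local Notation prodF r := (\big[@gaMul gT/gaOne gT]_(i <- r | P i) F i).

Lemma big_absorbl r x : (forall i, P i -> gaMul x (F i) = F i) -> has P r ->
  gaMul x (prodF r) = prodF r.
Proof.
move=> xF; elim: r => //= i r IHr; rewrite big_cons.
by case: (P i) / idP => [Pi _ | _ /IHr //]; rewrite -gaMulA xF.
Qed.

Lemma big_absorbr r y : (forall i, P i -> gaMul y (F i) = y) ->
  gaMul y (prodF r) = y.
Proof.
move=> yF; apply: (big_ind (fun f => gaMul y f = y)); first exact: gaMulr1.
  by move=> f g yf yg; rewrite -gaMulA yf yg.
exact: yF.
Qed.

Lemma big_mul_eq0 (r : seq I) i x :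
  (forall j, P j -> central (F j)) -> central x ->
  i \in r -> P i -> gaMul (F i) x = 0 -> gaMul (prodF r) x = 0.
Proof.
move=> cF cx + Pi Fix0; elim: r => //= j r IHr.
rewrite inE big_cons => /predU1P[<- | ir]; last first.
  by case: (P j); rewrite ?IHr // gaMulA IHr ?gaMulr0.
have cprod : central (prodF r).
  by apply: big_ind => //; [exact: central1 | exact: centralM].
by rewrite Pi gaMulA -(cprod.2 x cx.1) -gaMulA Fix0 gaMul0r.
Qed.

End BigProducts.

Lemma eps_central_idem (X Y : {group gT}) : (Y <| H)%g ->
  (forall L : {group gT},
     [&& L <| X, Y \proper L & minnormal (L / Y) (X / Y)]%g -> (L <| H)%g) ->
  central_idem H (eps X Y).
Proof.
move=> nYH nLH; rewrite /eps; case: eqP => _.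
  by apply/central_idemP; split; [exact: central_hat | exact: hat_idem].
apply: big_ind; [exact: central_idem1 | exact: central_idemM |].
move=> L idxL; have /and3P[_ pYL _] := idxL.
by apply: central_idem_hatB; [| exact: nLH | exact: proper_sub].
Qed.

End CentralElements.

Section Epsilon.
Variables (gT : finGroupType) (H K : {group gT}).
Hypothesis nKH : (K <| H)%g.

Lemma eps_central_idem_normal : central_idem H (eps H K).
Proof. by apply: eps_central_idem => // L /and3P[]. Qed.

Lemma eps_hatr : gaMul (eps H K) (hat K) = eps H K.
Proof.
have [epsH _ _] := eps_central_idem_normal.
rewrite ((central_hat nKH).2 _ epsH) /eps; case: eqP => [_ | /eqP neHK].
  exact: hat_idem.
apply: big_absorbl => [L /and3P[_ pKL _] | ].
  by rewrite gaMulBr hat_idem hatM_subl ?proper_sub.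
have [L idxL] := exists_minnormal_quotient nKH neHK.
by apply/hasP; exists L; rewrite ?mem_index_enum.
Qed.

Lemma eps_hat_factor_eq0 (L : {group gT}) :
  [&& L <| H, K \proper L & minnormal (L / K) (H / K)]%g ->
  gaMul (eps H K) (hat L) = 0.
Proof.
move=> idxL; have /and3P[nLH pKL _] := idxL.
rewrite /eps; case: eqP => [HK | _].
  by move: pKL; rewrite -HK properE (normal_sub nLH) => /andP[].
apply: (big_mul_eq0 (H := H) (i := L)) idxL _.
- by move=> L' /and3P[nL'H _ _]; apply: centralB; apply: central_hat.
- exact: central_hat.
- exact: mem_index_enum.
by rewrite gaMulBl hatM_subl ?proper_sub // hat_idem subrr.
Qed.

End Epsilon.

Section EpsilonCyclicQuotient.
Variables (gT : finGroupType) (H K A : {group gT}).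
Hypotheses (nKH : (K <| H)%g) (cHK : cyclic (H / K)%g) (nAH : (A <| H)%g).

Lemma eps_central_idemI : central_idem H (eps A (K :&: A)%g).
Proof.
apply: (eps_central_idem (Y := (K :&: A)%G)); first exact: normalI.
by move=> M /and3P[nMA pDM minMA]; apply: normal_minnormal_cyclic minMA.
Qed.

Lemma eps_mul_epsI : gaMul (eps H K) (eps A (K :&: A)%g) = eps H K.
Proof.
have epsD : gaMul (eps H K) (hat (K :&: A)) = eps H K.
  by rewrite -{1}(eps_hatr nKH) gaMulA (hatM_subr (M := (K :&: A)%G)) ?subsetIl
            ?eps_hatr.
rewrite [X in gaMul _ X = _]/eps; case: eqP => _; first exact: epsD.
apply: big_absorbr => M /and3P[nMA pDM minMA].
have epsM : gaMul (eps H K) (hat M) = 0.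
  rewrite -(eps_hatr nKH) gaMulA (hatM_mulg (G := (K <*> M)%G)).
    exact/eps_hat_factor_eq0/joing_minnormal_quotient/minMA.
  exact: esym (joing_mulg_normal nKH nAH nMA).
by rewrite gaMulBr epsD epsM subr0.
Qed.

End EpsilonCyclicQuotient.

Theorem lemma6 (gT : finGroupType) (G H K A : {group gT}) :
  H \subset G -> (K <| H)%g -> cyclic (H / K)%g -> (A <| H)%g ->
  exists e : galg gT,
    [/\ central_idem H e,
        gaMul e (eps H K) = 0,
        gaMul (eps H K) e = 0
      & eps A (K :&: A)%g = eps H K + e].
Proof.
move=> _ nKH cHK nAH.
have [] := central_idem_subr (eps_central_idem_normal nKH)
  (eps_central_idemI nKH cHK nAH) (eps_mul_epsI nKH cHK nAH).
by exists (eps A (K :&: A)%g - eps H K); split; rewrite // addrC subrK.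
Qed.
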